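(* Let $f$ be a nonconstant harmonic function on $K$. Among all junction points $x$ lying on the contour $[p_0,p_1]\cup[p_0,p_2]\cup[p_1,p_2]$ of $G_0$, there is at most one at which the normal derivative of $f$ (with respect to some cell having $x$ as a vertex) vanishes. Moreover, such an exceptional point exists and is a vertex of $G_0$ if and only if the restrictions of $f$ to all three edges of $G_0$ are monotone.
   Context: Let $p_0,p_1,p_2$ be the vertices of a unit equilateral triangle in $\mathbb{R}^2$, $F_i(x)=(x+p_i)/2$, and $K$ the Sierpinski gasket (the attractor of $F_0,F_1,F_2$). For a word $w$ of length $m$, $F_w=F_{w_1}\circ\cdots\circ F_{w_m}$ and $C_w=F_w(K)$ is a cell of level $m$ with vertices $F_w(p_0),F_w(p_1),F_w(p_2)$; the minimal triangles of $G_m$ are the triangles with these vertices. Junction points are the points of $\bigcup_m\bigcup_{|w|=m}\{F_w(p_0),F_w(p_1),F_w(p_2)\}$. A continuous $f:K\to\mathbb{R}$ is harmonic if for every $m\ge0$ and every minimal triangle of $G_m$ with vertices $v_i,v_j,v_k$, the value at the midpoint $v_{ij}$ of $[v_i,v_j]$ is $\frac15(2f(v_i)+2f(v_j)+f(v_k))$. For a harmonic $f$, a junction point $x=F_w(p_i)$ and the cell $C_w$ (with other vertices $y=F_w(p_j)$, $z=F_w(p_k)$), the normal derivative of $f$ at $x$ with respect to $C_w$ is $\partial_n f(x)=(5/3)^{|w|}\big(2f(x)-f(y)-f(z)\big)$ (this value does not change if $C_w$ is replaced by a smaller cell $C_{wi\cdots i}$ having $x$ as a vertex). Monotonicity of restrictions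 to edges refers to a linear parametrization of each edge. *)

From HB Require Import structures.
From mathcomp Require Import all_boot all_order all_algebra.
From mathcomp Require Import all_classical all_reals all_analysis.
Set Implicit Arguments. Unset Strict Implicit. Unset Printing Implicit Defensive.
Import Order.TTheory GRing.Theory Num.Theory.
Import numFieldNormedType.Exports.
Local Open Scope ring_scope.
Local Open Scope classical_set_scope.

Definition vtx {R : realType} (i : 'I_3) : R * R :=
  if (i : nat) == 0%N then (0, 0)
  else if (i : nat) == 1%N then (1, 0)
  else (1 / 2, Num.sqrt 3 / 2).

Definition Fmap {R : realType} (i : 'I_3) (x : R * R) : R * R :=
  ((x.1 + (vtx i).1) / 2, (x.2 + (vtx i).2) / 2).

Definition Fw {R : realType} (w : seq 'I_3) (x : R * R) : R * R :=
  foldr (@Fmap R) x w.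

Definition midpt {R : realType} (x y : R * R) : R * R :=
  ((x.1 + y.1) / 2, (x.2 + y.2) / 2).

Definition segpt {R : realType} (a b : R * R) (t : R) : R * R :=
  ((1 - t) * a.1 + t * b.1, (1 - t) * a.2 + t * b.2).

(* K is the Sierpinski gasket: the attractor of F_0, F_1, F_2, i.e. the
   (unique) nonempty compact set with K = F_0(K) u F_1(K) u F_2(K). *)
Definition SG_attractor {R : realType} (K : set (R * R)) : Prop :=
  [/\ compact K, K !=set0 &
      K = \bigcup_(i in [set: 'I_3]) (@Fmap R i @` K)].

(* harmonic: continuous on K and the 2-2-1 / 5 midpoint rule on every
   minimal triangle of every G_m *)
Definition sg_harmonic {R : realType} (K : set (R * R)) (f : R * R -> R) : Prop :=
  {within K, continuous f} /\
  forall (w : seq 'I_3) (i j k : 'I_3), i != j -> j != k -> i != k ->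
    f (midpt (Fw w (vtx i)) (Fw w (vtx j))) =
    (2 * f (Fw w (vtx i)) + 2 * f (Fw w (vtx j)) + f (Fw w (vtx k))) / 5.

Definition junction_point {R : realType} (x : R * R) : Prop :=
  exists (w : seq 'I_3) (i : 'I_3), x = Fw w (vtx i).

Definition on_contour {R : realType} (x : R * R) : Prop :=
  exists (a b : 'I_3), a != b /\
    exists t : R, 0 <= t <= 1 /\ x = segpt (vtx a) (vtx b) t.

Definition normal_derivative {R : realType} (f : R * R -> R)
    (w : seq 'I_3) (i : 'I_3) : R :=
  (5 / 3) ^+ size w *
  (2 * f (Fw w (vtx i)) - \sum_(l < 3 | l != i) f (Fw w (vtx l))).

Definition nd_vanishes {R : realType} (f : R * R -> R) (x : R * R) : Prop :=
  exists (w : seq 'I_3) (i : 'I_3),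
    Fw w (vtx i) = x /\ normal_derivative f w i = 0.

Definition edge_monotone {R : realType} (f : R * R -> R) (a b : 'I_3) : Prop :=
  (forall s t : R, 0 <= s -> s <= t -> t <= 1 ->
     f (segpt (vtx a) (vtx b) s) <= f (segpt (vtx a) (vtx b) t)) \/
  (forall s t : R, 0 <= s -> s <= t -> t <= 1 ->
     f (segpt (vtx a) (vtx b) t) <= f (segpt (vtx a) (vtx b) s)).

From HB Require Import structures.
From mathcomp Require Import all_boot all_order all_algebra.
From mathcomp Require Import all_classical all_reals all_analysis.
From mathcomp Require Import ring lra zify.
Import Order.TTheory GRing.Theory Num.Theory.
Import numFieldNormedType.Exports.
Local Open Scope ring_scope.
Local Open Scope classical_set_scope.

(* Write [dn_i] for the normal derivative of a harmonic [g] at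
   [p_i] with respect to [K] itself.  Restricting [g] to [F_c(K)] transforms
   these by [dn_c |-> 3/5 dn_c] and [dn_l |-> (dn_l - dn_c)/5], and the normal
   derivative at a junction point [F_w(p_e)] is a positive multiple of [dn_e]
   for [g o F_w].  On the edge [p_a p_b] the condition [dn_a dn_b < 0] is
   inherited by the subcells along the edge, so a zero of the normal derivative
   on that edge forces [dn_a dn_b >= 0]; descending the dyadic subdivision of
   the edge, this leaves room for only one zero.  Barycentric coordinates put
   every junction point of the contour on an edge, and zeros on two different
   edges force [dn_v = 0] at their common vertex [p_v].  Finally [dn_i = 0]
   gives [dn_a dn_b <= 0] on every edge, whence monotonicity on dyadic points
   and, by continuity, on the edge; conversely [dn_a dn_b > 0] makes [g] dip
   below [g(p_a)] (or rise above it) next to [p_a] and [p_b], and of three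
   nonzero numbers with sum zero two have the same sign.  Nonconstancy of [f]
   excludes [dn = 0], since junction points are dense in [K]. *)

Set Implicit Arguments. Unset Strict Implicit. Unset Printing Implicit Defensive.

Definition third (i j : 'I_3) : 'I_3 := inord (3 - i - j).

Lemma third_neq (i j : 'I_3) : i != j -> third i j != i /\ third i j != j.
Proof.
case: i j => [i ?] [j ?]; rewrite /third -!val_eqE /= => hij.
by rewrite inordK; lia.
Qed.

Lemma ord3_neq2 (i j k l : 'I_3) : i != j -> j != k -> i != k ->
  (l != i) && (l != j) = (l == k).
Proof.
case: i j k l => [i ?] [j ?] [k ?] [l ?]; rewrite -!val_eqE /= => *.
by apply/idP/idP; lia.
Qed.

Lemma ord3_other (x y k c : 'I_3) :
  x != y -> x != k -> y != k -> c != k -> (c == x) || (c == y).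
Proof. by case: x y k c => [x ?] [y ?] [k ?] [c ?]; rewrite -!val_eqE /=; lia. Qed.

Section Renormalization.
Variable R : realType.
Implicit Types (g : R * R -> R) (w : seq 'I_3).

Lemma sum_ord3 (F : 'I_3 -> R) (i j : 'I_3) : i != j ->
  \sum_(l < 3) F l = F i + F j + F (third i j).
Proof.
move=> hij; have [hki hkj] := third_neq hij.
rewrite (bigD1 i) //= (bigD1 j) 1?eq_sym //= addrA.
rewrite (eq_bigl (pred1 (third i j))) ?big_pred1_eq // => l /=.
by apply: ord3_neq2; rewrite // eq_sym.
Qed.

Lemma Fmap_midpt c (x y : R * R) : Fmap c (midpt x y) = midpt (Fmap c x) (Fmap c y).
Proof. by rewrite /Fmap /midpt /=; congr pair; field. Qed.

Lemma Fmap_fix c : Fmap c (vtx c) = vtx c :> R * R.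
Proof. by rewrite /Fmap; case: (vtx c) => a b /=; congr pair; field. Qed.

Lemma Fw_nseq_fix i n : Fw (nseq n i) (vtx i) = vtx i :> R * R.
Proof. by elim: n => //= n ->; rewrite Fmap_fix. Qed.

Lemma midpt_vtx i j : midpt (vtx i) (vtx j) = Fmap i (vtx j) :> R * R.
Proof. by rewrite /Fmap /midpt; congr pair; rewrite addrC. Qed.

Lemma Fmap_vtxC i j : Fmap i (vtx j) = Fmap j (vtx i) :> R * R.
Proof. by rewrite -!midpt_vtx /midpt; congr pair; rewrite addrC. Qed.

Definition midpoint_rule g := forall w (i j k : 'I_3), i != j -> j != k -> i != k ->
  g (midpt (Fw w (vtx i)) (Fw w (vtx j))) =
  (2 * g (Fw w (vtx i)) + 2 * g (Fw w (vtx j)) + g (Fw w (vtx k))) / 5.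

Lemma midpoint_rule_Fmap c g : midpoint_rule g -> midpoint_rule (g \o Fmap c).
Proof. by move=> H w i j k *; rewrite /= Fmap_midpt; apply: (H (c :: w)). Qed.

Lemma midpoint_ruleN g : midpoint_rule g -> midpoint_rule (fun x => - g x).
Proof. by move=> H w i j k *; rewrite (H w i j k) //; field. Qed.

Definition vsum g := \sum_(l < 3) g (vtx l).

(* The normal derivative at [p_i] with respect to the cell [K] itself:
   [2 g(p_i) - g(p_j) - g(p_k)]. *)
Definition dnormal g i := 3 * g (vtx i) - vsum g.

Lemma dnormal_sum g : \sum_(l < 3) dnormal g l = 0.
Proof. by rewrite /dnormal big_split /= -big_distrr /= sumr_const card_ord /vsum; ring. Qed.

Lemma dnormalN g i : dnormal (fun x => - g x) i = - dnormal g i.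
Proof. by rewrite /dnormal /vsum sumrN; ring. Qed.

Lemma vtx_sub g a b : g (vtx b) - g (vtx a) = (dnormal g b - dnormal g a) / 3.
Proof. by rewrite /dnormal; field. Qed.

Lemma normal_derivativeE g w i :
  normal_derivative g w i = (5 / 3) ^+ size w * dnormal (g \o Fw w) i.
Proof.
rewrite /normal_derivative /dnormal /vsum [in RHS](bigD1 i) //=.
by congr (_ * _); ring.
Qed.

Lemma nd_vanishesE g x : nd_vanishes g x <->
  exists w e, Fw w (vtx e) = x /\ dnormal (g \o Fw w) e = 0.
Proof.
have nz w : (5 / 3 : R) ^+ size w != 0 by rewrite expf_neq0.
split=> -[w [e [hx h0]]]; exists w, e; split=> //.
  by move: h0; rewrite normal_derivativeE => /eqP; rewrite mulf_eq0 (negbTE (nz w)) => /eqP.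
by rewrite normal_derivativeE h0 mulr0.
Qed.

Lemma Fmap_vtx_value g c l : midpoint_rule g -> g (Fmap c (vtx l)) =
  if l == c then g (vtx c) else (g (vtx c) + g (vtx l) + vsum g) / 5.
Proof.
move=> H; have [->|hlc] := eqVneq l c; first by rewrite Fmap_fix.
have hcl : c != l by rewrite eq_sym.
have [hkc hkl] := third_neq hcl.
rewrite -midpt_vtx (H [::] c l (third c l)) 1?eq_sym //=.
by rewrite /vsum (sum_ord3 _ hcl); field.
Qed.

Lemma vsum_Fmap g c : midpoint_rule g ->
  vsum (g \o Fmap c) = (6 * g (vtx c) + 3 * vsum g) / 5.
Proof.
move=> H; set l := lift c ord0; have hcl : c != l := neq_lift c ord0.
have [hkc hkl] := third_neq hcl.
have hlc : l != c by rewrite eq_sym.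
rewrite /vsum !(sum_ord3 _ hcl) /= !Fmap_vtx_value // eqxx (negbTE hlc) (negbTE hkc).
by rewrite /vsum (sum_ord3 _ hcl); field.
Qed.

Lemma dnormal_Fmap_fix g c : midpoint_rule g ->
  dnormal (g \o Fmap c) c = 3 / 5 * dnormal g c.
Proof. by move=> H; rewrite /dnormal vsum_Fmap //= Fmap_fix; field. Qed.

Lemma dnormal_Fmap g c l : midpoint_rule g -> l != c ->
  dnormal (g \o Fmap c) l = (dnormal g l - dnormal g c) / 5.
Proof. by move=> H hl; rewrite /dnormal vsum_Fmap //= Fmap_vtx_value // (negbTE hl); field. Qed.

Lemma dnormal_nseq_fix g i n : midpoint_rule g ->
  dnormal (g \o Fw (nseq n i)) i = (3 / 5) ^+ n * dnormal g i.
Proof.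
elim: n g => [|n IH] g H; first by rewrite expr0 mul1r.
have := IH _ (midpoint_rule_Fmap i H); rewrite /= => ->.
by rewrite dnormal_Fmap_fix // exprS mulrCA mulrA.
Qed.

Definition dnormal_nonzero g := exists l, dnormal g l != 0.

Lemma dnormal_nonzero_pair g i j : dnormal_nonzero g -> i != j ->
  dnormal g i = 0 -> dnormal g j != 0.
Proof.
move=> [l hl] hij hi; apply: contraNneq hl => hj; apply/eqP.
have := dnormal_sum g; rewrite (sum_ord3 _ hij) hi hj !add0r => hk.
have [->//|hli] := eqVneq l i; have [->//|hlj] := eqVneq l j.
have [hki hkj] := third_neq hij.
suff /eqP -> : l == third i j by [].
by rewrite -(ord3_neq2 l hij) ?hli ?hlj // eq_sym.
Qed.

Lemma dnormal_nonzero_Fmap g c : midpoint_rule g -> dnormal_nonzero g ->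
  dnormal_nonzero (g \o Fmap c).
Proof.
move=> H [l hl]; have [hc|hc] := eqVneq (dnormal g c) 0.
  have hlc : l != c by apply: contraNneq hl => ->; rewrite hc.
  by exists l; rewrite dnormal_Fmap // hc subr0 mulf_neq0 // invr_eq0.
by exists c; rewrite dnormal_Fmap_fix // mulf_neq0.
Qed.

Lemma junction_const g c : midpoint_rule g -> (forall l, g (vtx l) = c) ->
  forall w l, g (Fw w (vtx l)) = c.
Proof.
move=> + + w; elim: w g => [|c' w IH] g H hc l; first exact: hc.
have hs : vsum g = 3 * c.
  by rewrite /vsum (eq_bigr (fun=> c)) ?sumr_const ?card_ord ?mulr_natl.
apply: (IH (g \o Fmap c') (midpoint_rule_Fmap c' H)) => l' /=.
by rewrite Fmap_vtx_value //; case: ifP => _; rewrite ?hc ?hs //; field.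
Qed.

End Renormalization.

Section EdgeZeros.
Variable R : realType.
Implicit Types (g : R * R -> R) (w : seq 'I_3).

(* A vanishing normal derivative at [F_w(p_e)], a point of the edge of [G_0]
   opposite to [p_k]. *)
Definition edge_zero g (k : 'I_3) w (e : 'I_3) :=
  [/\ k \notin w, e != k & dnormal (g \o Fw w) e = 0].

Lemma edge_zero_cons g k c w e :
  edge_zero g k (c :: w) e -> c != k /\ edge_zero (g \o Fmap c) k w e.
Proof. by case; rewrite in_cons negb_or eq_sym => /andP[hck hkw] hek h0. Qed.

Lemma dnormal_Fmap_neg g x y : midpoint_rule g -> y != x ->
  dnormal g x * dnormal g y < 0 ->
  dnormal (g \o Fmap x) x * dnormal (g \o Fmap x) y < 0.
Proof. by move=> H hyx; rewrite dnormal_Fmap_fix // dnormal_Fmap //; nra. Qed.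

Lemma edge_zero_sign g k x y w e : midpoint_rule g -> x != y -> x != k -> y != k ->
  edge_zero g k w e -> 0 <= dnormal g x * dnormal g y.
Proof.
move=> H hxy hxk hyk hz; rewrite leNgt; apply/negP => neg.
have hyx : y != x by rewrite eq_sym.
elim: w g H hz neg => [|c w IH] g H hz neg.
  case: hz => _ hek h0; have h0' : dnormal g e = 0 := h0.
  by case/orP: (ord3_other hxy hxk hyk hek) => /eqP he; move: neg;
    rewrite -he h0' ?mul0r ?mulr0 ltxx.
have [hck {}hz] := edge_zero_cons hz.
case/orP: (ord3_other hxy hxk hyk hck) => /eqP hc; subst c;
  apply: (IH _ (midpoint_rule_Fmap _ H) hz).
  exact: dnormal_Fmap_neg.
by rewrite mulrC; apply: dnormal_Fmap_neg; rewrite // mulrC.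
Qed.

Lemma edge_zero_Fmap_sign g k c c' w e : midpoint_rule g -> c != k -> c' != k ->
  c != c' -> edge_zero (g \o Fmap c) k w e ->
  0 <= dnormal g c * (dnormal g c' - dnormal g c).
Proof.
move=> H hck hc'k hcc' /(edge_zero_sign (midpoint_rule_Fmap c H) hcc' hck hc'k).
by rewrite dnormal_Fmap_fix // dnormal_Fmap 1?eq_sym //; nra.
Qed.

Lemma edge_zero_at_vertex g k w e e' : midpoint_rule g -> dnormal_nonzero g ->
  e != k -> dnormal g e = 0 -> edge_zero g k w e' -> Fw w (vtx e') = vtx e :> R * R.
Proof.
elim: w g => [|c w IH] g H hnd hek he hz.
  case: hz => _ _ h0; have [->//|hne] := eqVneq e' e.
  by have := dnormal_nonzero_pair hnd hne h0; rewrite he eqxx.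
have [hck {}hz] := edge_zero_cons hz.
have [hce|hce] := eqVneq c e.
  subst c; rewrite /= (IH (g \o Fmap e)) ?Fmap_fix //.
  - exact: midpoint_rule_Fmap.
  - exact: dnormal_nonzero_Fmap.
  - by rewrite dnormal_Fmap_fix // he mulr0.
have := edge_zero_Fmap_sign H hck hek hce hz; rewrite he sub0r => hc.
have hc0 : dnormal g c = 0 by nra.
by have := dnormal_nonzero_pair hnd hce hc0; rewrite he eqxx.
Qed.

Lemma edge_zero_uniq g k w e w' e' : midpoint_rule g -> dnormal_nonzero g ->
  edge_zero g k w e -> edge_zero g k w' e' -> Fw w (vtx e) = Fw w' (vtx e') :> R * R.
Proof.
elim: w g w' => [|c w IH] g w' H hnd hz hz'.
  by case: hz => _ hek h0; rewrite (edge_zero_at_vertex H hnd hek h0 hz').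
case: w' hz' => [|c' w'] hz'.
  by case: hz' => _ he'k h0; rewrite (edge_zero_at_vertex H hnd he'k h0 hz).
have [hck hz1] := edge_zero_cons hz; have [hc'k hz1'] := edge_zero_cons hz'.
have Hc := midpoint_rule_Fmap c H; have Hc' := midpoint_rule_Fmap c' H.
have [hcc'|hcc'] := eqVneq c c'.
  by subst c'; rewrite /= (IH _ w' Hc (dnormal_nonzero_Fmap c H hnd) hz1 hz1').
(* The zeros lie in the two halves [F_c(K)] and [F_c'(K)] of the edge, and the
   sign conditions force them both to be the common point [F_c(p_c')]. *)
have hc'c : c' != c by rewrite eq_sym.
have s := edge_zero_Fmap_sign H hck hc'k hcc' hz1.
have s' := edge_zero_Fmap_sign H hc'k hck hc'c hz1'.
have hdn : dnormal g c' = dnormal g c by nra.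
have z : dnormal (g \o Fmap c) c' = 0 by rewrite dnormal_Fmap // hdn subrr mul0r.
have z' : dnormal (g \o Fmap c') c = 0 by rewrite dnormal_Fmap // hdn subrr mul0r.
rewrite /= (edge_zero_at_vertex Hc (dnormal_nonzero_Fmap c H hnd) hc'k z hz1).
by rewrite (edge_zero_at_vertex Hc' (dnormal_nonzero_Fmap c' H hnd) hck z' hz1') Fmap_vtxC.
Qed.

End EdgeZeros.

Section Barycentric.
Variable R : realType.
Implicit Types (g : R * R -> R) (w : seq 'I_3).

Definition bary (k : 'I_3) (p : R * R) : R :=
  if (k : nat) == 0%N then 1 - p.1 - p.2 / Num.sqrt 3
  else if (k : nat) == 1%N then p.1 - p.2 / Num.sqrt 3 else 2 * p.2 / Num.sqrt 3.

Let sqrt3_neq0 : Num.sqrt 3 != 0 :> R.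
Proof. by rewrite sqrtr_eq0 -ltNge. Qed.

Lemma bary_vtx k c : bary k (vtx c) = (c == k)%:R.
Proof.
have := sqrt3_neq0; rewrite /bary /vtx -val_eqE.
by case: k c => [[|[|[|k]]] ?] [[|[|[|c]]] ?] //= h; field.
Qed.

Lemma bary_Fmap k c p : bary k (Fmap c p) = (bary k p + bary k (vtx c)) / 2.
Proof. by have := sqrt3_neq0; rewrite /bary /Fmap; case: k => [[|[|[|k]]] ?] //= h; field. Qed.

Lemma bary_segpt k (a b : 'I_3) t :
  bary k (segpt (vtx a) (vtx b) t) = (1 - t) * (a == k)%:R + t * (b == k)%:R.
Proof.
rewrite -!bary_vtx; have := sqrt3_neq0; rewrite /bary /segpt.
by case: k => [[|[|[|k]]] ?] //= h; field.
Qed.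

Lemma bary_Fw_ge0 k w e : 0 <= bary k (Fw w (vtx e)).
Proof. by elim: w => [|c w IH] /=; rewrite ?bary_Fmap bary_vtx ?divr_ge0 ?addr_ge0. Qed.

Lemma bary_Fw_eq0 k w e : bary k (Fw w (vtx e)) = 0 -> k \notin w /\ e != k.
Proof.
elim: w => [|c w IH] /=; first by rewrite bary_vtx => /eqP; rewrite pnatr_eq0 eqb0.
rewrite bary_Fmap bary_vtx => /eqP; rewrite mulf_eq0 invr_eq0 pnatr_eq0 orbF.
rewrite paddr_eq0 ?bary_Fw_ge0 ?ler0n // pnatr_eq0 eqb0 => /andP[/eqP/IH[hkw hek] hck].
by rewrite in_cons negb_or eq_sym hck.
Qed.

Lemma on_contour_bary x : on_contour x -> exists k, bary k x = 0 :> R.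
Proof.
move=> [a [b [hab [t [_ ->]]]]]; have [hka hkb] := third_neq hab.
exists (third a b).
by rewrite bary_segpt ![_ == third a b]eq_sym (negbTE hka) (negbTE hkb) !mulr0 addr0.
Qed.

Lemma contour_edge_zero g x : on_contour x -> nd_vanishes g x ->
  exists k w e, edge_zero g k w e /\ Fw w (vtx e) = x.
Proof.
move=> /on_contour_bary[k hk] /nd_vanishesE[w [e [hx h0]]].
have [hkw hek] : k \notin w /\ e != k by apply: bary_Fw_eq0; rewrite hx.
by exists k, w, e.
Qed.

End Barycentric.

Section ContourZeros.
Variable R : realType.
Variable f : R * R -> R.
Hypothesis Hf : midpoint_rule f.

Lemma contour_zero_uniq x y : dnormal_nonzero f ->
  on_contour x -> nd_vanishes f x -> on_contour y -> nd_vanishes f y -> x = y.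
Proof.
move=> hnd cx vx cy vy.
have [k [w [e [hz <-]]]] := contour_edge_zero cx vx.
have [k' [w' [e' [hz' <-]]]] := contour_edge_zero cy vy.
have [hkk'|hkk'] := eqVneq k k'; first by subst k'; exact: edge_zero_uniq hz hz'.
(* Zeros on two different edges force a zero at their common vertex [p_v],
   which is then the zero on both edges. *)
set v := third k k'; have [hvk hvk'] := third_neq hkk'.
have hk'k : k' != k by rewrite eq_sym.
have hk'v : k' != v by rewrite eq_sym.
have hkv : k != v by rewrite eq_sym.
have s := edge_zero_sign Hf hk'v hk'k hvk hz.
have s' := edge_zero_sign Hf hkv hkk' hvk' hz'.
have := dnormal_sum f; rewrite (sum_ord3 _ hkk') -/v => hsum.
have hv : dnormal f v = 0 by nra.
by rewrite (edge_zero_at_vertex Hf hnd hvk hv hz) (edge_zero_at_vertex Hf hnd hvk' hv hz').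
Qed.

Lemma vertex_nd_vanishes i : nd_vanishes f (vtx i) <-> dnormal f i = 0.
Proof.
split; last by move=> h0; apply/nd_vanishesE; exists [::], i.
move=> /nd_vanishesE[w [e [hx h0]]].
set j := lift i ord0; have hij : i != j := neq_lift i ord0.
set k := third i j; have [hki hkj] := third_neq hij.
have hbary l : l != i -> l \notin w /\ e != l.
  by move=> hli; apply: (@bary_Fw_eq0 R); rewrite hx bary_vtx eq_sym (negbTE hli).
have hji : j != i by rewrite eq_sym.
have hjk : j != k by rewrite eq_sym.
have [hjw hej] := hbary j hji; have [hkw hek] := hbary k hki.
have hw : w = nseq (size w) i.
  apply/all_pred1P/allP => c hc /=; rewrite -(ord3_neq2 c hjk hki hji).
  by apply/andP; split; apply: contraTneq hc => ->.
have he : e = i by apply/eqP; rewrite -(ord3_neq2 e hjk hki hji) hej hek.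
have nz : (3 / 5 : R) ^+ size w != 0 by rewrite expf_neq0.
move: h0; rewrite hw he dnormal_nseq_fix // => /eqP.
by rewrite mulf_eq0 (negbTE nz) => /eqP.
Qed.
End ContourZeros.

Section Edges.
Variable R : realType.
Implicit Types (g : R * R -> R) (a b : 'I_3).

Lemma segpt0 (x y : R * R) : segpt x y 0 = x.
Proof. by rewrite /segpt subr0 !mul1r !mul0r !addr0; case: x. Qed.

Lemma segpt1 (x y : R * R) : segpt x y 1 = y.
Proof. by rewrite /segpt subrr !mul1r !mul0r !add0r; case: y. Qed.

Lemma segptC (x y : R * R) t : segpt x y t = segpt y x (1 - t).
Proof. by rewrite /segpt; congr pair; ring. Qed.

Lemma segpt_dyadic_l a b m k : segpt (vtx a) (vtx b) (k%:R / 2 ^+ m.+1) =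
  Fmap a (segpt (vtx a) (vtx b) (k%:R / 2 ^+ m)) :> R * R.
Proof. by rewrite /Fmap /segpt /= exprS; congr pair; field; rewrite expf_neq0. Qed.

Lemma segpt_dyadic_r a b m k : (2 ^ m <= k)%N ->
  segpt (vtx a) (vtx b) (k%:R / 2 ^+ m.+1) =
  Fmap b (segpt (vtx a) (vtx b) ((k - 2 ^ m)%N%:R / 2 ^+ m)) :> R * R.
Proof.
move=> hk; rewrite /Fmap /segpt /= natrB // natrX exprS.
by congr pair; field; rewrite expf_neq0.
Qed.

Lemma Fw_nseq_segpt a b n :
  Fw (nseq n a) (vtx b) = segpt (vtx a) (vtx b) (2 ^- n) :> R * R.
Proof.
elim: n => [|n IH] /=; first by rewrite expr0 invr1 segpt1.
by rewrite IH /Fmap /segpt /= exprS; congr pair; field; rewrite expf_neq0.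
Qed.

Definition edge_nondecr g a b := forall s t : R, 0 <= s -> s <= t -> t <= 1 ->
  g (segpt (vtx a) (vtx b) s) <= g (segpt (vtx a) (vtx b) t).

Lemma edge_monotoneE g a b :
  edge_monotone g a b <-> edge_nondecr g a b \/ edge_nondecr g b a.
Proof.
have flip x y : (forall s t : R, 0 <= s -> s <= t -> t <= 1 ->
    g (segpt (vtx x) (vtx y) t) <= g (segpt (vtx x) (vtx y) s)) ->
    edge_nondecr g y x.
  move=> h s t s0 st t1; rewrite !(segptC (vtx y)).
  by apply: h; rewrite ?lerB ?subr_ge0 ?lerBlDr ?lerDl.
split=> -[h|h]; [by left | right; exact: flip | by left | right].
move=> s t s0 st t1; rewrite !(segptC (vtx a)).
by apply: h; rewrite ?lerB ?subr_ge0 ?lerBlDr ?lerDl.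
Qed.

Lemma edge_monotoneN g a b :
  edge_monotone (fun x => - g x) a b <-> edge_monotone g a b.
Proof.
by split=> -[h|h]; [right|left|right|left] => s t s0 st t1;
  rewrite -lerN2 ?opprK; apply: h.
Qed.

Lemma exists_expr_gt (m : nat) (C : R) : (1 < m)%N -> exists n, C < m%:R ^+ n.
Proof.
move=> hm; exists (Num.truncn `|C|).+1.
rewrite (le_lt_trans (ler_norm C)) // (lt_le_trans (truncnS_gt _)) //.
by rewrite -natrX ler_nat ltnW // ltn_expl.
Qed.

Lemma dnormal_nseq g a b n : midpoint_rule g -> b != a ->
  dnormal (g \o Fw (nseq n a)) b =
  (3 / 5) ^+ n * ((dnormal g b + dnormal g a / 2) / 3 ^+ n - dnormal g a / 2).
Proof.
elim: n g => [|n IH] g H hba; first by rewrite !expr0 mul1r divr1; ring.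
have := IH _ (midpoint_rule_Fmap a H) hba; rewrite /= => ->.
rewrite dnormal_Fmap_fix // dnormal_Fmap // !exprS.
by field; rewrite expf_neq0.
Qed.

(* [g(F_a^n p_b) - g(p_a) = (3/5)^n/3 * ((dn_b + dn_a/2)/3^n - 3 dn_a/2)],
   which is negative for large [n] when [dn_a > 0]. *)
Lemma dnormal_gt0_drop g a b : midpoint_rule g -> a != b -> 0 < dnormal g a ->
  exists n, g (Fw (nseq n a) (vtx b)) < g (vtx a).
Proof.
move=> H hab ha; have hba : b != a by rewrite eq_sym.
set al := dnormal g a; set be := dnormal g b.
have [n hn] := @exists_expr_gt 3 ((be + al / 2) / (3 * al / 2)) isT.
exists n; have := vtx_sub (g \o Fw (nseq n a)) a b; rewrite /= Fw_nseq_fix => e.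
rewrite -subr_lt0 e dnormal_nseq // dnormal_nseq_fix // -/al -/be.
have P0 : 0 < (3 / 5 : R) ^+ n by rewrite exprn_gt0.
have T0 : 0 < (3 : R) ^+ n by rewrite exprn_gt0.
have hal : 0 < 3 * al / 2 by rewrite divr_gt0 // mulr_gt0.
have hQ : (be + al / 2) / 3 ^+ n < 3 * al / 2.
  by rewrite ltr_pdivrMr // [X in _ < X]mulrC -ltr_pdivrMr.
set P := (3 / 5 : R) ^+ n in P0 *; set Q := (be + al / 2) / 3 ^+ n in hQ *.
nra.
Qed.

Lemma not_edge_nondecr g a b : midpoint_rule g -> a != b -> 0 < dnormal g a ->
  ~ edge_nondecr g a b.
Proof.
move=> H hab ha hmon; have [n hn] := dnormal_gt0_drop H hab ha.
have h1 : 1 <= (2 : R) ^+ n by rewrite exprn_ege1 // ler1n.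
have t0 : 0 <= (2 : R) ^- n by rewrite invr_ge0 exprn_ge0.
have t1 : (2 : R) ^- n <= 1 by rewrite invf_le1 // (lt_le_trans ltr01 h1).
by have := hmon 0 _ (lexx 0) t0 t1; rewrite segpt0 -Fw_nseq_segpt leNgt hn.
Qed.

Lemma not_edge_monotone g a b : midpoint_rule g -> a != b ->
  0 < dnormal g a * dnormal g b -> ~ edge_monotone g a b.
Proof.
wlog ha : g / 0 < dnormal g a.
  move=> hw H hab hp; have [ha|ha] := ltrP 0 (dnormal g a); first exact: hw.
  rewrite -edge_monotoneN; apply: (hw _ _ (midpoint_ruleN H) hab); rewrite !dnormalN ?mulrNN //.
  by rewrite oppr_gt0 lt_neqAle ha andbT; apply: contraTneq hp => ->; rewrite mul0r ltxx.
move=> H hab hp; have hb : 0 < dnormal g b by rewrite -(pmulr_rgt0 _ ha).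
by rewrite edge_monotoneE => -[]; apply: not_edge_nondecr; rewrite // eq_sym.
Qed.

Lemma dyadic_nondecr g a b m k l : midpoint_rule g -> a != b ->
  dnormal g a <= 0 -> 0 <= dnormal g b -> (k <= l <= 2 ^ m)%N ->
  g (segpt (vtx a) (vtx b) (k%:R / 2 ^+ m)) <= g (segpt (vtx a) (vtx b) (l%:R / 2 ^+ m)).
Proof.
move=> + hab; have hba : b != a by rewrite eq_sym.
elim: m g k l => [|m IH] g k l H ha hb /andP[hkl hl].
  rewrite expr0 !divr1; move: hl hkl; rewrite expn0.
  case: l => [|[|//]] _; first by rewrite leqn0 => /eqP ->.
  case: k => [|[|//]] _; rewrite ?segpt0 segpt1 //.
  by have := vtx_sub g a b; lra.
have left_half k' l' : (k' <= l' <= 2 ^ m)%N ->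
    g (segpt (vtx a) (vtx b) (k'%:R / 2 ^+ m.+1)) <=
    g (segpt (vtx a) (vtx b) (l'%:R / 2 ^+ m.+1)).
  rewrite !segpt_dyadic_l; apply: (IH (g \o Fmap a)); first exact: midpoint_rule_Fmap.
    by rewrite dnormal_Fmap_fix // pmulr_rle0.
  by rewrite dnormal_Fmap // divr_ge0 // subr_ge0 (le_trans ha).
have right_half k' l' : (2 ^ m <= k' <= l')%N -> (l' <= 2 ^ m.+1)%N ->
    g (segpt (vtx a) (vtx b) (k'%:R / 2 ^+ m.+1)) <=
    g (segpt (vtx a) (vtx b) (l'%:R / 2 ^+ m.+1)).
  move=> /andP[h1 h2] h3; rewrite !segpt_dyadic_r ?(leq_trans h1 h2) //.
  apply: (IH (g \o Fmap b)); first exact: midpoint_rule_Fmap.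
  - by rewrite dnormal_Fmap // mulr_le0_ge0 // subr_le0 (le_trans ha).
  - by rewrite dnormal_Fmap_fix // mulr_ge0.
  - by move: h3; rewrite expnS; lia.
have [hl1|hl1] := leqP l (2 ^ m); first by apply: left_half; rewrite hkl.
have [hk1|hk1] := leqP (2 ^ m) k; first by apply: right_half; rewrite ?hk1.
apply: (@le_trans _ _ (g (segpt (vtx a) (vtx b) ((2 ^ m)%N%:R / 2 ^+ m.+1)))).
  by apply: left_half; rewrite (ltnW hk1) leqnn.
by apply: right_half; rewrite // leqnn (ltnW hl1).
Qed.

Lemma dnormal_mul_le0 g i a b : dnormal g i = 0 -> a != b ->
  dnormal g a * dnormal g b <= 0.
Proof.
move=> hi hab; have [->|hia] := eqVneq a i; first by rewrite hi mul0r.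
have [->|hib] := eqVneq b i; first by rewrite hi mulr0.
have [hka hkb] := third_neq hab.
have : (i != a) && (i != b) by rewrite ![i == _]eq_sym hia hib.
have hak : a != third a b by rewrite eq_sym.
have hbk : b != third a b by rewrite eq_sym.
rewrite (ord3_neq2 _ hab hbk hak) => /eqP hik.
have := dnormal_sum g; rewrite (sum_ord3 _ hab) -hik hi addr0 => /eqP.
by rewrite addr_eq0 => /eqP ->; rewrite mulNr oppr_le0 -expr2 sqr_ge0.
Qed.

Lemma dnormal_eq0_of_edge_monotone g : midpoint_rule g ->
  (forall a b, a != b -> edge_monotone g a b) -> exists i, dnormal g i = 0.
Proof.
move=> H hm; set i : 'I_3 := ord0; set j := lift i ord0; set k := third i j.
have hij : i != j := neq_lift i ord0; have [hki hkj] := third_neq hij.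
have hik : i != k by rewrite eq_sym.
have hjk : j != k by rewrite eq_sym.
have [hi|hi] := eqVneq (dnormal g i) 0; first by exists i.
have [hj|hj] := eqVneq (dnormal g j) 0; first by exists j.
have [hk|hk] := eqVneq (dnormal g k) 0; first by exists k.
have := dnormal_sum g; rewrite (sum_ord3 _ hij) -/k => hs.
have [p|p] := ltrP 0 (dnormal g i * dnormal g j).
  by case: (not_edge_monotone H hij p (hm _ _ hij)).
have [q|q] := ltrP 0 (dnormal g i * dnormal g k).
  by case: (not_edge_monotone H hik q (hm _ _ hik)).
have [r|r] := ltrP 0 (dnormal g j * dnormal g k).
  by case: (not_edge_monotone H hjk r (hm _ _ hjk)).
by move: hi hj hk; rewrite !neq_lt => /orP[] ? /orP[] ? /orP[] ?; nra.
Qed.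

End Edges.

Section Topology.
Variable R : realType.
Implicit Types (K : set (R * R)) (f : R * R -> R).

Lemma continuous_within_ball K f x e : {within K, continuous f} -> K x -> 0 < e ->
  exists2 d : R, 0 < d & forall y, K y -> ball x d y -> `|f x - f y| < e.
Proof.
move=> hc Kx e0; have := hc x; rewrite /continuous_at.
case: (nbhs_subspaceP K x) => // _ /cvgrPdist_lt /(_ e e0).
rewrite /= near_withinE /= => /nbhs_ballP[d d0 H].
by exists d => // y Ky hy; apply: H.
Qed.

Lemma closed_ball_approx K x : closed K ->
  (forall d : R, 0 < d -> exists2 y, K y & ball x d y) -> K x.
Proof.
move=> cK H; apply: cK => B /nbhs_ballP[d d0 Hd].
by have [y Ky hy] := H d d0; exists y; split => //; apply: Hd.
Qed.

Lemma ball_pairE (x y : R * R) d :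
  ball x d y <-> `|x.1 - y.1| < d /\ `|x.2 - y.2| < d.
Proof. by []. Qed.

Lemma ball_Fmap c (x y : R * R) d : ball x (2 * d) y -> ball (Fmap c x) d (Fmap c y).
Proof.
rewrite !ball_pairE /= !ltr_norml => -[/andP[h1 h2] /andP[h3 h4]].
by split; apply/andP; split; lra.
Qed.

Lemma ball_Fw w (x y : R * R) d : ball x (2 ^+ size w * d) y -> ball (Fw w x) d (Fw w y).
Proof.
elim: w d => [|c w IH] d; first by rewrite expr0 mul1r.
by rewrite /= exprS -mulrA mulrCA => /IH /ball_Fmap.
Qed.

Lemma exists_exp2V_lt (d : R) : 0 < d -> exists n, 2 ^- n < d.
Proof.
move=> d0; have [n hn] := @exists_expr_gt R 2 d^-1 isT.
by exists n; rewrite -(invrK d) ltf_pV2 ?posrE ?invr_gt0 ?exprn_gt0.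
Qed.

Lemma exists_ball_Fw (x : R * R) (M d : R) : 0 < d -> exists n, forall w y,
  size w = n -> `|x.1 - y.1| <= M -> `|x.2 - y.2| <= M -> ball (Fw w x) d (Fw w y).
Proof.
move=> d0; have [n hn] := @exists_expr_gt R 2 (M / d) isT.
exists n => w y hw h1 h2; apply: ball_Fw; rewrite hw.
have hM : M < 2 ^+ n * d by rewrite -ltr_pdivrMr.
by split; apply: le_lt_trans hM.
Qed.

Lemma segpt_ball (a b : 'I_3) (s u d : R) :
  `|s - u| < d -> ball (segpt (vtx a) (vtx b) s) d (segpt (vtx a) (vtx b) u).
Proof.
have s3 : 0 <= Num.sqrt (3 : R) <= 2.
  have := sqr_sqrtr (ler0n R 3); have := sqrtr_ge0 (3 : R).
  by move=> r0 r3; apply/andP; split; nra.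
have coord (i j : 'I_3) :
    `|(vtx i : R * R).1 - (vtx j).1| <= 1 /\ `|(vtx i : R * R).2 - (vtx j).2| <= 1.
  move: s3 => /andP[s0 s2]; rewrite /vtx.
  by do ! case: ifP => _; split; rewrite /= ler_norml; apply/andP; split; lra.
move=> hd; have [h1 h2] := coord b a.
have e1 : (segpt (vtx a) (vtx b) s).1 - (segpt (vtx a) (vtx b) u).1 =
  (s - u) * ((vtx b).1 - (vtx a).1) by rewrite /segpt /=; ring.
have e2 : (segpt (vtx a) (vtx b) s).2 - (segpt (vtx a) (vtx b) u).2 =
  (s - u) * ((vtx b).2 - (vtx a).2) by rewrite /segpt /=; ring.
by split; rewrite /ball /= ?e1 ?e2 normrM; apply: le_lt_trans hd; rewrite ler_piMr.
Qed.

Lemma dyadic_floor (t : R) n : 0 <= t <= 1 ->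
  (Num.truncn (t * 2 ^+ n) <= 2 ^ n)%N /\
  `|t - (Num.truncn (t * 2 ^+ n))%:R / 2 ^+ n| < 2 ^- n.
Proof.
move=> /andP[t0 t1]; have h2 : 0 < (2 : R) ^+ n by rewrite exprn_gt0.
have /andP[k1 k2] := truncn_itv (mulr_ge0 t0 (ltW h2)).
split; first by rewrite -(ler_nat R) natrX (le_trans k1) // ler_piMl.
rewrite ger0_norm ?subr_ge0 ?ler_pdivrMr //.
set T := (2 : R) ^+ n in h2 k1 k2 *; set k := Num.truncn _ in k1 k2 *.
have -> : t - k%:R / T = (t * T - k%:R) / T by field; rewrite gt_eqF.
by rewrite ltr_pdivrMr // mulVf ?gt_eqF //; move: k2; rewrite -natr1; lra.
Qed.

Lemma compact_coord_bound K : compact K ->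
  exists M : R, forall y, K y -> `|y.1| <= M /\ `|y.2| <= M.
Proof.
move=> /compact_bounded[N [_ HN]]; exists (`|N| + 1) => y Ky.
have hN : N < `|N| + 1 by rewrite (le_lt_trans (ler_norm N)) // ltrDl.
by have := HN _ hN y Ky; rewrite /= prod_normE ge_max => /andP[].
Qed.

End Topology.

Section Gasket.
Variable R : realType.
Variable K : set (R * R).
Hypothesis hK : SG_attractor K.

Let K_closed : closed K.
Proof. by case: hK => cK _ _; apply: compact_closed => //; exact: hausdorff_normed. Qed.

Lemma K_Fmap c x : K x -> K (Fmap c x).
Proof. by case: hK => _ _ hKe Kx; rewrite hKe; exists c => //; exists x. Qed.

Lemma K_Fw w x : K x -> K (Fw w x).
Proof. by elim: w => //= c w IH /IH; exact: K_Fmap. Qed.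

Lemma K_preimage x n : K x -> exists w y, [/\ size w = n, K y & x = Fw w y].
Proof.
move=> Kx; elim: n => [|n [w [y [hs Ky ->]]]]; first by exists [::], x.
have [_ _ hKe] := hK; move: Ky; rewrite {1}hKe => -[i _ [z Kz <-]].
by exists (rcons w i), z; rewrite size_rcons hs /Fw -cats1 foldr_cat.
Qed.

Lemma K_vtx i : K (vtx i).
Proof.
have [_ [x0 Kx0] _] := hK; apply: (closed_ball_approx K_closed) => d d0.
have [n hn] := exists_ball_Fw (vtx i) (`|(vtx i).1 - x0.1| + `|(vtx i).2 - x0.2|) d0.
exists (Fw (nseq n i) x0); first exact: K_Fw.
by rewrite -{1}(@Fw_nseq_fix R i n); apply: hn; rewrite ?size_nseq ?lerDl ?lerDr.
Qed.

Lemma K_dyadic (a b : 'I_3) m k : (k <= 2 ^ m)%N ->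
  K (segpt (vtx a) (vtx b) (k%:R / 2 ^+ m)).
Proof.
elim: m k => [|m IH] k hk.
  move: hk; rewrite expn0 expr0 divr1.
  by case: k => [|[|//]] _; [rewrite segpt0 | rewrite segpt1]; exact: K_vtx.
have [hk'|hk'] := leqP k (2 ^ m).
  by rewrite segpt_dyadic_l; apply/K_Fmap/IH.
rewrite segpt_dyadic_r; last exact: ltnW.
apply/K_Fmap/IH.
by move: hk; rewrite expnS; lia.
Qed.

Lemma K_segpt (a b : 'I_3) t : 0 <= t <= 1 -> K (segpt (vtx a) (vtx b) t).
Proof.
move=> ht; apply: (closed_ball_approx K_closed) => d /exists_exp2V_lt[n hn].
have [hk hd] := dyadic_floor n ht.
by exists (segpt (vtx a) (vtx b) ((Num.truncn (t * 2 ^+ n))%:R / 2 ^+ n));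
  [exact: K_dyadic | apply: segpt_ball; exact: lt_trans hn].
Qed.

Variable f : R * R -> R.
Hypothesis hc : {within K, continuous f}.

Lemma edge_nondecr_dyadic (a b : 'I_3) :
  (forall m k l, (k <= l <= 2 ^ m)%N ->
     f (segpt (vtx a) (vtx b) (k%:R / 2 ^+ m)) <=
     f (segpt (vtx a) (vtx b) (l%:R / 2 ^+ m))) ->
  edge_nondecr f a b.
Proof.
move=> hD s t s0 st t1; rewrite leNgt; apply/negP => hlt.
set e := (f (segpt (vtx a) (vtx b) s) - f (segpt (vtx a) (vtx b) t)) / 2.
have e0 : 0 < e by rewrite divr_gt0 // subr_gt0.
have hs : 0 <= s <= 1 by rewrite s0 (le_trans st).
have ht : 0 <= t <= 1 by rewrite t1 (le_trans s0).
have [d1 d10 H1] := continuous_within_ball hc (K_segpt a b hs) e0.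
have [d2 d20 H2] := continuous_within_ball hc (K_segpt a b ht) e0.
have [n hn] : exists n, 2 ^- n < Num.min d1 d2.
  by apply: exists_exp2V_lt; rewrite lt_min d10 d20.
have [hk hds] := dyadic_floor n hs; have [hl hdt] := dyadic_floor n ht.
set k := Num.truncn (s * _) in hk hds; set l := Num.truncn (t * _) in hl hdt.
have hkl : (k <= l)%N by apply: le_truncn; rewrite ler_pM2r // exprn_gt0.
move: hn; rewrite lt_min => /andP[hn1 hn2].
have := H1 _ (K_dyadic a b hk) (segpt_ball a b (lt_trans hds hn1)).
have := H2 _ (K_dyadic a b hl) (segpt_ball a b (lt_trans hdt hn2)).
have := hD n k l; rewrite hkl hl => /(_ isT).
by rewrite !ltr_norml => hm /andP[u1 u2] /andP[u3 u4]; rewrite /e in u1 u2 u3 u4 e0; lra.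
Qed.


Lemma const_on_K c : midpoint_rule f -> (forall l, f (vtx l) = c) ->
  forall x, K x -> f x = c.
Proof.
move=> H hv x Kx; apply/eqP/negPn/negP => hne.
have e0 : 0 < `|f x - c| by rewrite normr_gt0 subr_eq0.
have [d d0 Hd] := continuous_within_ball hc Kx e0.
have [cK _ _] := hK; have [M HM] := compact_coord_bound cK.
have [n hn] := exists_ball_Fw (vtx ord0) M d0.
have [w [y [hs Ky hx]]] := K_preimage n Kx.
have [hy1 hy2] := HM y Ky.
have hb : ball (Fw w y) d (Fw w (vtx ord0)).
  by apply/ball_sym/hn; rewrite //= sub0r normrN.
by have := Hd _ (K_Fw w (K_vtx ord0)); rewrite (junction_const H hv) ltxx hx => /(_ hb).
Qed.

Lemma dnormal_nonzero_of_nonconst : midpoint_rule f ->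
  (exists x y : R * R, K x /\ K y /\ f x != f y) -> dnormal_nonzero f.
Proof.
move=> H [x [y [Kx [Ky hxy]]]].
case: (boolP [exists l, dnormal f l != 0]) => [/existsP//|].
rewrite negb_exists => /forallP hz.
have hv l : f (vtx l) = vsum f / 3.
  by move/negPn/eqP: (hz l); rewrite /dnormal => h; lra.
by move: hxy; rewrite (const_on_K H hv Kx) (const_on_K H hv Ky) eqxx.
Qed.

Lemma edge_monotone_of_dnormal_eq0 i a b : midpoint_rule f -> dnormal f i = 0 ->
  a != b -> edge_monotone f a b.
Proof.
move=> H hi hab; have hp := dnormal_mul_le0 hi hab.
have hba : b != a by rewrite eq_sym.
rewrite edge_monotoneE.
have [[ha hb]|[ha hb]] : (dnormal f a <= 0 /\ 0 <= dnormal f b) \/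
    (dnormal f b <= 0 /\ 0 <= dnormal f a).
  by case: (lerP (dnormal f a) 0) => ha; case: (lerP 0 (dnormal f b)) => hb;
    [left | right | right | right]; split; nra.
- by left; apply: edge_nondecr_dyadic => m k l hkl; exact: dyadic_nondecr.
- by right; apply: edge_nondecr_dyadic => m k l hkl; exact: dyadic_nondecr.
Qed.

End Gasket.

Unset Implicit Arguments.

Theorem theorem5 (R : realType) (K : set (R * R)) (hK : SG_attractor K)
    (f : R * R -> R) (hf : sg_harmonic K f)
    (hnc : exists x y, K x /\ K y /\ f x != f y) :
  (forall x y : R * R,
      junction_point x -> on_contour x -> nd_vanishes f x ->
      junction_point y -> on_contour y -> nd_vanishes f y -> x = y) /\
  ((exists i : 'I_3, nd_vanishes f (vtx i)) <->
     (forall a b : 'I_3, a != b -> edge_monotone f a b)).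
Proof.
have [hc Hf] := hf.
have hnz := dnormal_nonzero_of_nonconst hK hc Hf hnc.
split.
  by move=> x y _ cx vx _ cy vy; exact: (contour_zero_uniq Hf hnz cx vx cy vy).
split.
  move=> [i /(vertex_nd_vanishes Hf) hi] a b.
  exact: (edge_monotone_of_dnormal_eq0 hK hc Hf hi).
by move=> /(dnormal_eq0_of_edge_monotone Hf)[i /(vertex_nd_vanishes Hf) hi]; exists i.
Qed.
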